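(* Let $G$ be a row stratified grid-labelled graph of type $(a,b)$, and for $1\le i<a$ let $S_i$ be the grid-labelled graph of type $(a,b)$ whose edges are the diagonal edges of $G$ with one endpoint in row $i$ and the other in row $i+1$. If $G$ satisfies the degree criterion, then each $S_i$ satisfies the degree criterion. The analogous statement holds for column stratified graphs, with $S_j$ ($1\le j<b$) consisting of the diagonal edges between columns $j$ and $j+1$.
   Context: A grid-labelled graph of type $(a,b)$ is a simple graph whose vertex set is the grid $[a]\times[b]$. An edge $\{(i,j),(k,l)\}$ is diagonal if $i\neq k$ and $j\neq l$. $G$ is row stratified if every diagonal edge $\{(i,j),(k,l)\}$ satisfies $|i-k|=1$, and column stratified if every diagonal edge satisfies $|j-l|=1$. The partial transpose $\Gamma(G)$ is the grid-labelled graph with edge set $\{\{(k,j),(i,l)\}:\{(i,j),(k,l)\}\in E(G)\}$; $G$ satisfies the degree criterion if every vertex has the same degree in $G$ and in $\Gamma(G)$. *)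

From mathcomp Require Import all_boot.
Set Implicit Arguments. Unset Strict Implicit. Unset Printing Implicit Defensive.

(* Vertices of a grid-labelled graph of type (a,b): the grid [a] x [b],
   with rows/columns indexed 0-based by 'I_a and 'I_b (row r here is row r+1
   in the paper). *)
Definition grid (a b : nat) : finType := ('I_a * 'I_b)%type.

Definition simple_graph (a b : nat) (e : rel (grid a b)) : Prop :=
  symmetric e /\ irreflexive e.

Definition diagonal (a b : nat) (x y : grid a b) : bool :=
  (x.1 != y.1) && (x.2 != y.2).

Definition row_stratified (a b : nat) (e : rel (grid a b)) : Prop :=
  forall x y, e x y -> diagonal x y ->
    ((x.1 : nat) == (y.1 : nat).+1) || ((y.1 : nat) == (x.1 : nat).+1).

Definition col_stratified (a b : nat) (e : rel (grid a b)) : Prop :=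
  forall x y, e x y -> diagonal x y ->
    ((x.2 : nat) == (y.2 : nat).+1) || ((y.2 : nat) == (x.2 : nat).+1).

(* Partial transpose: {(k,j),(i,l)} is an edge iff {(i,j),(k,l)} is an edge of G.
   For x = (k,j), y = (i,l): e (i,j) (k,l). *)
Definition partial_transpose (a b : nat) (e : rel (grid a b)) : rel (grid a b) :=
  fun x y => e (y.1, x.2) (x.1, y.2).

Definition degree (a b : nat) (e : rel (grid a b)) (v : grid a b) : nat :=
  #|[pred w | e v w]|.

Definition degree_criterion (a b : nat) (e : rel (grid a b)) : Prop :=
  forall v, degree e v = degree (partial_transpose e) v.

Definition row_strip (a b : nat) (e : rel (grid a b)) (i : nat) : rel (grid a b) :=
  fun x y => [&& e x y, diagonal x y &
     (((x.1 : nat) == i) && ((y.1 : nat) == i.+1)) ||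
     (((y.1 : nat) == i) && ((x.1 : nat) == i.+1))].

Definition col_strip (a b : nat) (e : rel (grid a b)) (j : nat) : rel (grid a b) :=
  fun x y => [&& e x y, diagonal x y &
     (((x.2 : nat) == j) && ((y.2 : nat) == j.+1)) ||
     (((y.2 : nat) == j) && ((x.2 : nat) == j.+1))].

From mathcomp Require Import all_boot zify.

(* Split the neighbours of v = (r, c) into those in column c, those in row r and
   the diagonal ones.  Partial transposition preserves the first two counts, so
   the degree criterion says that G and Γ(G) have equally many diagonal
   neighbours at v.  The neighbours of v in another row r' outside column c are,
   in Γ(G), exactly as many as the neighbours of (r', c) in row r in G.  For a
   row stratified graph the diagonal neighbours lie in rows r - 1 and r + 1, and
   an induction on r, starting from row 0 which has nothing above it, shows that
   G and Γ(G) agree separately on the neighbours above and below each vertex;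
   these are the degrees in S_i.  Columns reduce to rows by flipping the grid. *)

Set Implicit Arguments.
Unset Strict Implicit.
Unset Printing Implicit Defensive.

Section Neighbourhoods.
Variables a b : nat.
Implicit Types (f g : rel (grid a b)) (u v w : grid a b).

Local Notation pt := (@partial_transpose a b).

Definition col_nbrs f v := #|[pred w | f v w && (w.2 == v.2)]|.

Definition row_nbrs f v (r : nat) :=
  #|[pred w | f v w && (w.2 != v.2) && ((w.1 : nat) == r)]|.

(* Rows above [v] are described by [w.1.+1 == v.1] rather than [w.1 == v.1.-1],
   which would wrongly count row 0 as lying above itself. *)
Definition above_nbrs f v :=
  #|[pred w | f v w && (w.2 != v.2) && ((w.1 : nat).+1 == v.1)]|.

Definition diag_nbrs f v := #|[pred w | f v w && diagonal v w]|.

Lemma eq_degree f g : f =2 g -> degree f =1 degree g.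
Proof. by move=> fg v; apply: eq_card => w; rewrite !inE fg. Qed.

Lemma card_predID (P Q : pred (grid a b)) :
  #|[pred w | P w]| = #|[pred w | P w && Q w]| + #|[pred w | P w && ~~ Q w]|.
Proof.
rewrite -(cardID Q [pred w | P w]); congr (_ + _); apply: eq_card => w;
by rewrite !inE andbC.
Qed.

Lemma degree_split f v :
  degree f v = col_nbrs f v + row_nbrs f v v.1 + diag_nbrs f v.
Proof.
rewrite /degree (card_predID _ (fun w => w.2 == v.2)) -addnA; congr (_ + _).
rewrite (card_predID _ (fun w => w.1 == v.1)); congr (_ + _).
apply: eq_card => w; rewrite !inE /diagonal [w.1 == _]eq_sym [w.2 == _]eq_sym.
by case: (f v w) => //=; rewrite andbC.
Qed.

Lemma row_nbrsE f v (r : 'I_a) :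
  row_nbrs f v r = #|[pred l : 'I_b | (l != v.2) && f v (r, l)]|.
Proof.
have inj_row : injective (fun l : 'I_b => ((r, l) : grid a b)) by move=> l l' [].
rewrite -(card_image inj_row); apply: eq_card => -[r' l].
apply/idP/imageP => [|[l' Hl' [-> ->]]]; last by move: Hl'; rewrite !inE /= eqxx andbT andbC.
rewrite !inE /= => /andP[/andP[Hf Hl] /eqP/val_inj Hr]; subst r'.
by exists l; rewrite // inE Hl.
Qed.

Lemma row_nbrs_pt f u v : u.2 = v.2 -> row_nbrs (pt f) v u.1 = row_nbrs f u v.1.
Proof.
case: u => r l /= ->; rewrite !row_nbrsE; apply: eq_card => l0.
by rewrite !inE /partial_transpose.
Qed.

Lemma col_nbrs_pt f v : symmetric f -> col_nbrs (pt f) v = col_nbrs f v.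
Proof.
move=> f_sym; apply: eq_card => -[r l]; rewrite !inE /partial_transpose /=.
by case: eqP => [->|]; rewrite ?andbF // f_sym; case: v.
Qed.

Lemma diag_nbrs_pt f v : symmetric f -> degree_criterion f ->
  diag_nbrs (pt f) v = diag_nbrs f v.
Proof.
move=> f_sym crit; apply/eqP; rewrite -(eqn_add2l (col_nbrs f v + row_nbrs f v v.1)).
rewrite -degree_split crit degree_split col_nbrs_pt //.
by rewrite (@row_nbrs_pt f v v erefl).
Qed.

Lemma row_stratified_pt f : row_stratified f -> row_stratified (pt f).
Proof.
move=> strat x y /strat; rewrite /diagonal /= [x.1 == _]eq_sym => /[apply].
by rewrite orbC.
Qed.

Lemma diag_nbrs_row_stratified f v : row_stratified f ->
  diag_nbrs f v = row_nbrs f v v.1.+1 + above_nbrs f v.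
Proof.
move=> strat; rewrite /diag_nbrs (card_predID _ (fun w => (w.1 : nat) == v.1.+1)).
congr (_ + _); apply: eq_card => w; rewrite !inE.
  case: (f v w) => //=; rewrite /diagonal -!val_eqE /=.
  move: (w.1 : nat) (v.1 : nat) (w.2 : nat) (v.2 : nat) => ????; lia.
case fvw: (f v w) => //=; move: (strat v w fvw); rewrite /diagonal -!val_eqE /=.
move: (w.1 : nat) (v.1 : nat) (w.2 : nat) (v.2 : nat) => ????; lia.
Qed.

Lemma above_nbrs0 f v : v.1 = 0 :> nat -> above_nbrs f v = 0.
Proof. by move=> v0; apply: eq_card0 => w; rewrite !inE v0 andbF. Qed.

Lemma above_nbrsS f v n : v.1 = n.+1 :> nat -> above_nbrs f v = row_nbrs f v n.
Proof. by move=> vS; apply: eq_card => w; rewrite !inE vS eqSS. Qed.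

Lemma degree_row_strip f i v : degree (row_strip f i) v =
  if (v.1 : nat) == i then row_nbrs f v i.+1
  else if (v.1 : nat) == i.+1 then above_nbrs f v else 0.
Proof.
rewrite /degree /row_strip /diagonal.
case: eqP => [vi|_]; last case: eqP => [vS|vNS].
- apply: eq_card => w; rewrite !inE -!val_eqE /= vi.
  by case: (f v w) => //=; move: (w.1 : nat) (v.2 : nat) (w.2 : nat) => ???; lia.
- apply: eq_card => w; rewrite !inE -!val_eqE /= vS.
  by case: (f v w) => //=; move: (w.1 : nat) (v.2 : nat) (w.2 : nat) => ???; lia.
apply: eq_card0 => w; rewrite !inE -!val_eqE /=.
by case: (f v w) => //=; move: (w.1 : nat) vNS => ??; lia.
Qed.

Lemma row_strip_pt f i : pt (row_strip f i) =2 row_strip (pt f) i.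
Proof.
move=> x y; rewrite /row_strip /partial_transpose /diagonal /=.
by rewrite [y.1 == _]eq_sym orbC.
Qed.

Section RowStratified.
Variable e : rel (grid a b).
Hypotheses (e_sym : symmetric e) (e_strat : row_stratified e)
  (e_crit : degree_criterion e).

Lemma below_nbrs_pt v : above_nbrs (pt e) v = above_nbrs e v ->
  row_nbrs (pt e) v v.1.+1 = row_nbrs e v v.1.+1.
Proof.
move=> above_eq; apply/eqP; rewrite -(eqn_add2r (above_nbrs e v)).
rewrite -diag_nbrs_row_stratified // -[in X in X == _]above_eq.
by rewrite -diag_nbrs_row_stratified ?diag_nbrs_pt //; apply: row_stratified_pt.
Qed.

Lemma above_nbrs_pt v : above_nbrs (pt e) v = above_nbrs e v.
Proof.
suff above_eq n u : u.1 = n :> nat -> above_nbrs (pt e) u = above_nbrs e u.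
  exact: above_eq.
elim: n u {v} => [|n IHn] v vn; first by rewrite !above_nbrs0.
have n_lt_a : n < a by rewrite ltnW // -vn.
pose u : grid a b := (Ordinal n_lt_a, v.2).
rewrite !(above_nbrsS _ vn) -[n]/(nat_of_ord u.1).
rewrite (@row_nbrs_pt e u v erefl) -(@row_nbrs_pt e v u erefl) vn.
by rewrite (below_nbrs_pt (IHn u erefl)).
Qed.

Lemma degree_criterion_row_strip i : degree_criterion (row_strip e i).
Proof.
move=> v; rewrite (eq_degree (row_strip_pt e i)) !degree_row_strip.
case: eqP => [<-|_]; first by rewrite (below_nbrs_pt (above_nbrs_pt v)).
by rewrite above_nbrs_pt.
Qed.

End RowStratified.

End Neighbourhoods.

Definition flip_grid a b (x : grid a b) : grid b a := (x.2, x.1).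

Definition flip_rel a b (f : rel (grid a b)) : rel (grid b a) :=
  fun x y => f (flip_grid x) (flip_grid y).

Lemma flip_gridK a b : cancel (@flip_grid a b) (@flip_grid b a).
Proof. by case. Qed.

Section Flip.
Variables a b : nat.
Implicit Types f g : rel (grid a b).

Lemma degree_flip f v : degree (flip_rel f) v = degree f (flip_grid v).
Proof.
rewrite /degree -(card_image (can_inj (@flip_gridK b a))); apply: eq_card => w.
apply/imageP/idP => [[x fx ->] //|fw].
by exists (flip_grid w); rewrite ?inE /flip_rel flip_gridK.
Qed.

Lemma symmetric_flip f : symmetric f -> symmetric (flip_rel f).
Proof. by move=> f_sym x y; apply: f_sym. Qed.

Lemma partial_transpose_flip f : symmetric f ->
  partial_transpose (flip_rel f) =2 flip_rel (partial_transpose f).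
Proof. by move=> f_sym x y; apply: f_sym. Qed.

Lemma degree_criterion_eq f g : f =2 g -> degree_criterion f -> degree_criterion g.
Proof.
move=> fg crit v; rewrite -(eq_degree fg) crit; apply: eq_degree => x y.
exact: fg.
Qed.

Lemma degree_criterion_flip f : symmetric f -> degree_criterion f ->
  degree_criterion (flip_rel f).
Proof.
move=> f_sym crit v.
by rewrite (eq_degree (partial_transpose_flip f_sym)) !degree_flip crit.
Qed.

Lemma row_stratified_flip f : col_stratified f -> row_stratified (flip_rel f).
Proof. by move=> strat x y fxy; rewrite /diagonal andbC; apply: (strat _ _ fxy). Qed.

Lemma col_strip_flip f j : flip_rel (row_strip (flip_rel f) j) =2 col_strip f j.
Proof.
move=> x y; rewrite /col_strip /row_strip /flip_rel /diagonal /= !flip_gridK.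
by rewrite [(x.2 != _) && _]andbC.
Qed.

Lemma symmetric_row_strip f i : symmetric f -> symmetric (row_strip f i).
Proof.
move=> f_sym x y; rewrite /row_strip /diagonal f_sym [x.1 == _]eq_sym [x.2 == _]eq_sym.
by rewrite orbC.
Qed.

End Flip.

Theorem mainTheorem9 (a b : nat) (e : rel (grid a b)) (He : simple_graph e) :
  (row_stratified e -> degree_criterion e ->
     forall i : nat, i.+1 < a -> degree_criterion (row_strip e i)) /\
  (col_stratified e -> degree_criterion e ->
     forall j : nat, j.+1 < b -> degree_criterion (col_strip e j)).
Proof.
have [e_sym _] := He; split=> [strat crit i _ | strat crit j _].
  exact: degree_criterion_row_strip.
apply: degree_criterion_eq (col_strip_flip e j) _.
apply/degree_criterion_flip/degree_criterion_row_strip.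
- exact/symmetric_row_strip/symmetric_flip.
- exact: symmetric_flip.
- exact: row_stratified_flip.
- exact: degree_criterion_flip.
Qed.
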